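(* $u_n\le \frac{2+o(1)}{\sqrt{n}}$ as $n\to\infty$; that is, $\limsup_{n\to\infty}\sqrt{n}\,u_n\le 2$.
   Context: For a real orthogonal $n\times n$ matrix $M=(m_{i,j})$ let $u_M:=\max_{1\le i,j\le n}|m_{i,j}|$, and let $u_n:=\min_{M\in O(n)} u_M$, where $O(n)$ denotes the group of real orthogonal $n\times n$ matrices. *)

From HB Require Import structures.
From mathcomp Require Import all_boot all_order all_algebra.
From mathcomp Require Import all_classical all_reals all_analysis.
Set Implicit Arguments. Unset Strict Implicit. Unset Printing Implicit Defensive.
Import Order.TTheory GRing.Theory Num.Theory.
Local Open Scope ring_scope.
Local Open Scope classical_set_scope.

Definition orthogonal_mx (R : realType) (n : nat) (M : 'M[R]_n) : Prop :=
  M *m M^T = 1%:M.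

(* u_M = max_{i,j} |m_{i,j}| (0 for the empty matrix, n = 0) *)
Definition u_mx (R : realType) (n : nat) (M : 'M[R]_n) : R :=
  \big[Num.max/0]_(i < n) \big[Num.max/0]_(j < n) `|M i j|.

(* u_n = min over O(n) of u_M (the minimum exists by compactness, so it
   equals the infimum used here) *)
Definition u_n (R : realType) (n : nat) : R :=
  inf [set u_mx M | M in [set M : 'M[R]_n | orthogonal_mx M]].

From HB Require Import structures.
From mathcomp Require Import all_boot all_order all_algebra.
From mathcomp Require Import all_classical all_reals all_analysis.
From mathcomp Require Import ring lra zify.
Import Order.TTheory GRing.Theory Num.Theory.
Local Open Scope ring_scope.

(* The discrete cosine transform matrix
     C_(k, j) = c_k cos ((2j + 1) k pi / 2n),  c_0 = sqrt (1/n),  c_k = sqrt (2/n),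
   is orthogonal, and all its entries are at most sqrt (2/n) in absolute value.
   Hence u_n <= sqrt (2/n), i.e. sqrt n * u_n <= sqrt 2 < 2 for every n.
   Orthogonality reduces, via cos x cos y = (cos (x - y) + cos (x + y)) / 2, to
   the vanishing of sum_(j < n) cos ((2j + 1) a) for a = m pi / 2n, 0 < m < 2n,
   which follows from the telescoping identity
     2 sin a cos ((2j + 1) a) = sin ((2j + 2) a) - sin (2j a). *)

Section CosineSums.
Variable R : realType.

Lemma sin_pi_mulrn (m : nat) : sin (pi *+ m) = 0 :> R.
Proof.
elim: m => [|m IHm]; first by rewrite mulr0n sin0.
by rewrite mulrS addrC sinDpi IHm oppr0.
Qed.

Lemma cos_mul_cos (x y : R) : cos x * cos y = (cos (x - y) + cos (x + y)) / 2.
Proof. by rewrite cosB cosD; field. Qed.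

Lemma sin_mul_sum_cos_odd (a : R) (n : nat) :
  2 * sin a * \sum_(j < n) cos ((j.*2.+1)%:R * a) = sin ((n.*2)%:R * a).
Proof.
pose f (j : nat) := sin ((j.*2)%:R * a).
have -> : sin ((n.*2)%:R * a) = f n - f 0%N by rewrite /f mul0r sin0 subr0.
rewrite mulr_sumr -(telescope_sumr f (leq0n n)) big_mkord.
apply: eq_bigr => j _; rewrite /f.
have -> : ((j.+1).*2)%:R * a = (j.*2.+1)%:R * a + a by rewrite doubleS -!natr1; ring.
have -> : (j.*2)%:R * a = (j.*2.+1)%:R * a - a by rewrite -natr1; ring.
by rewrite sinD sinB; ring.
Qed.

Definition dct_freq (n k : nat) : R := k%:R * pi / (n.*2)%:R.

Definition dct_cos_sum (n k : nat) : R :=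
  \sum_(j < n) cos ((j.*2.+1)%:R * dct_freq n k).

Lemma dct_cos_sum0 (n : nat) : dct_cos_sum n 0 = n%:R.
Proof.
rewrite /dct_cos_sum (eq_bigr (fun=> 1)) ?sumr_const ?card_ord //.
by move=> j _; rewrite /dct_freq !mul0r mulr0 cos0.
Qed.

Lemma dct_cos_sum_eq0 (n k : nat) : (0 < k < n.*2)%N -> dct_cos_sum n k = 0.
Proof.
move=> /andP[k_gt0 k_lt2n].
have n2_gt0 : 0 < (n.*2)%:R :> R by rewrite ltr0n; lia.
have sin_freq_gt0 : 0 < sin (dct_freq n k).
  apply: sin_gt0_pi; rewrite /dct_freq divr_gt0 ?n2_gt0 ?mulr_gt0 ?pi_gt0 ?ltr0n //=.
  by rewrite ltr_pdivrMr // mulrC ltr_pM2l ?pi_gt0 ?ltr_nat.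
have := sin_mul_sum_cos_odd (dct_freq n k) n.
have -> : (n.*2)%:R * dct_freq n k = pi *+ k.
  by rewrite /dct_freq -mulr_natl; field; rewrite gt_eqF.
rewrite sin_pi_mulrn => /eqP; rewrite mulf_eq0 mulf_eq0 (gt_eqF sin_freq_gt0) orbF.
by rewrite pnatr_eq0 => /eqP.
Qed.

Lemma dct_sum_cos_mul_cos (n k l : nat) : (l <= k)%N ->
  \sum_(j < n) cos ((j.*2.+1)%:R * dct_freq n k) * cos ((j.*2.+1)%:R * dct_freq n l)
  = (dct_cos_sum n (k - l) + dct_cos_sum n (k + l)) / 2.
Proof.
move=> le_lk; rewrite /dct_cos_sum -big_split mulr_suml /=.
apply: eq_bigr => j _; rewrite cos_mul_cos /dct_freq natrB // natrD.
by congr ((cos _ + cos _) / 2); ring.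
Qed.

End CosineSums.

Section DCT.
Variable R : realType.

Definition dct_scale (n k : nat) : R :=
  Num.sqrt ((if k == 0%N then 1 else 2) / n%:R).

Definition dct (n : nat) : 'M[R]_n :=
  \matrix_(k, j) (dct_scale n k * cos ((j.*2.+1)%:R * dct_freq R n k)).

Lemma dct_row_dot (n : nat) (k l : 'I_n) :
  (dct n *m (dct n)^T) k l =
  dct_scale n k * dct_scale n l *
  \sum_(j < n) cos ((j.*2.+1)%:R * dct_freq R n k) * cos ((j.*2.+1)%:R * dct_freq R n l).
Proof. by rewrite !mxE mulr_sumr; apply: eq_bigr => j _; rewrite !mxE; ring. Qed.

Lemma dct_orthogonal (n : nat) : orthogonal_mx (dct n).
Proof.
apply/matrixP => k l; rewrite dct_row_dot mxE.
have n_gt0 : (0 < n)%N by case: n k {l} => [[]|].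
have n_neq0 : n%:R != 0 :> R by rewrite pnatr_eq0 -lt0n.
wlog le_lk : k l / (l <= k)%N => [hwlog|].
  have [|lt_kl] := leqP l k; first exact: hwlog.
  rewrite eq_sym -(hwlog l k (ltnW lt_kl)) [dct_scale n l * _]mulrC.
  by congr (_ * _); apply: eq_bigr => j _; rewrite mulrC.
rewrite dct_sum_cos_mul_cos //.
have lt_kn := ltn_ord k; have lt_ln := ltn_ord l.
case: (eqVneq k l) => [<-|neq_kl].
  rewrite subnn dct_cos_sum0 -expr2 /dct_scale sqr_sqrtr; last first.
    by rewrite divr_ge0 ?ler0n //; case: ifP.
  rewrite mulr1n; case: eqP => [k0|/eqP k_neq0].
    by rewrite k0 addn0 dct_cos_sum0; field.
  by rewrite dct_cos_sum_eq0 ?addr0; [field | lia].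
have lt_lk : (l < k)%N by rewrite ltn_neqAle eq_sym neq_kl.
rewrite mulr0n !dct_cos_sum_eq0 ?addr0 ?mul0r ?mulr0 //; lia.
Qed.

Lemma dct_scale_le (n k : nat) : dct_scale n k <= Num.sqrt (2 / n%:R).
Proof.
rewrite ler_wsqrtr // ler_wpM2r ?invr_ge0 ?ler0n //.
by case: ifP => _; rewrite ?ler1n.
Qed.

Lemma norm_dct_le (n : nat) (k j : 'I_n) : `|dct n k j| <= Num.sqrt (2 / n%:R).
Proof.
rewrite mxE normrM ger0_norm ?sqrtr_ge0 // -[leRHS]mulr1.
by rewrite ler_pM ?sqrtr_ge0 ?normr_ge0 ?dct_scale_le // ler_norml cos_le1 cos_geN1.
Qed.

End DCT.

Section MaxEntry.
Variable R : realType.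

Lemma u_mx_ge0 (n : nat) (M : 'M[R]_n) : 0 <= u_mx M.
Proof.
apply: (big_ind (fun x : R => 0 <= x)) => // [x y x_ge0 _|i _].
  by rewrite le_max x_ge0.
apply: (big_ind (fun x : R => 0 <= x)) => // x y x_ge0 _.
by rewrite le_max x_ge0.
Qed.

Lemma u_mx_le (n : nat) (M : 'M[R]_n) (c : R) :
  0 <= c -> (forall i j, `|M i j| <= c) -> u_mx M <= c.
Proof.
move=> c_ge0 Mc; apply: (big_ind (fun x : R => x <= c)) => // [x y|i _].
  by rewrite ge_max => -> ->.
apply: (big_ind (fun x : R => x <= c)) => // x y.
by rewrite ge_max => -> ->.
Qed.

Lemma u_n_le_u_mx (n : nat) (M : 'M[R]_n) : orthogonal_mx M -> u_n R n <= u_mx M.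
Proof.
move=> orthoM; apply: ge_inf; last by exists M.
by exists 0 => _ [N _ <-]; exact: u_mx_ge0.
Qed.

Lemma u_n_le_sqrt (n : nat) : u_n R n <= Num.sqrt (2 / n%:R).
Proof.
apply: le_trans (u_n_le_u_mx _ _ (dct_orthogonal R n)) _.
exact: u_mx_le (sqrtr_ge0 _) (@norm_dct_le R n).
Qed.

Lemma sqrt_mul_u_n_le (n : nat) : Num.sqrt (n%:R) * u_n R n <= Num.sqrt 2.
Proof.
apply: le_trans (ler_wpM2l (sqrtr_ge0 _) (u_n_le_sqrt n)) _.
rewrite -sqrtrM ?ler0n // ler_wsqrtr //.
have [->|n_gt0] := posnP n; first by rewrite mul0r.
by rewrite mulrA mulrC mulrA mulVf ?mul1r // pnatr_eq0 -lt0n n_gt0.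
Qed.

End MaxEntry.

Lemma limn_esup_le_ub (R : realType) (u : (\bar R)^nat) (c : \bar R) :
  (forall n, (u n <= c)%E) -> (limn_esup u <= c)%E.
Proof.
move=> uc; rewrite limn_esup_lim (cvg_lim _ (@cvg_esups_inf _ _)) //.
apply: le_trans (ereal_inf_lbound (ex_intro2 _ _ 0%N I erefl)) _.
by apply: ge_ereal_sup => _ [k _ <-].
Qed.

Theorem theorem2p3 (R : realType) :
  (limn_esup (fun n : nat => (Num.sqrt (n%:R : R) * u_n R n)%:E) <= 2%:E)%E.
Proof.
apply: limn_esup_le_ub => n; rewrite lee_fin.
apply: le_trans (sqrt_mul_u_n_le R n) _.
by rewrite -[leRHS]ger0_norm // -sqrtr_sqr ler_wsqrtr //; lra.
Qed.
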